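(* Assuming that $\mathcal{P}, \mathcal{Q}$ admit densities, we then obtain \begin{equation} W(\mathcal{P},\mathcal{Q})\leq \sum\limits_{y\in\mathcal{Y}} \check{W}_{y}(\mathcal{P},\mathcal{Q}), \end{equation} where we have a class-weighted joint distribution unbalanced Wasserstein distance $\check{W}_{y}(\mathcal{P},\mathcal{Q})$ defined as $$\check{W}_{y}(\mathcal{P},\mathcal{Q}) = \sup\limits_{\|\varphi_y\|_{Lip}\leq 1} \mathbb{E}_{z\sim\mathcal{P}_\mathcal{Z}}\left[\varphi_y(z,y)\mathcal{P}(Y=y|z)\right]-\mathbb{E}_{z\sim\mathcal{Q}_\mathcal{Z}}\left[\varphi_y(z,y)\mathcal{Q}(Y=y|z)\right].$$
   Context: $\mathcal{Z}\subset\mathbb{R}^d$ is a compact measurable feature space and $\mathcal{Y}$ a finite (discrete) label space; $\mathcal{P},\mathcal{Q}$ are probability distributions on $\mathcal{Z}\times\mathcal{Y}$ (the observed, partially labeled joint distributions of two domains), with marginals $\mathcal{P}_\mathcal{Z},\mathcal{Q}_\mathcal{Z}$ on $\mathcal{Z}$ and conditionals $\mathcal{P}(Y=y|z)$, $\mathcal{Q}(Y=y|z)$. $W$ is the 1-Wasserstein distance with cost the Euclidean metric on $\mathcal{Z}\times\mathcal{Y}$, i.e. $W(\mathcal{P},\mathcal{Q})=\sup_{\|\varphi\|_{Lip}\le 1}\mathbb{E}_{\mathcal{P}}[\varphi]-\mathbb{E}_{\mathcal{Q}}[\varphi]$ (Kantorovich–Rubinstein dual), and $\|\varphi_y\|_{Lip}$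 denotes the Lipschitz constant of $\varphi_y$. *)

From HB Require Import structures.
From mathcomp Require Import all_boot all_order all_algebra.
From mathcomp Require Import all_classical all_reals all_analysis.
Set Implicit Arguments. Unset Strict Implicit. Unset Printing Implicit Defensive.
Import Order.TTheory GRing.Theory Num.Theory.
Import numFieldNormedType.Exports.
Local Open Scope classical_set_scope.
Local Open Scope ring_scope.

Definition feat (R : realType) (d : nat) :=
  g_sigma_algebraType (@open 'rV[R]_d).

(* Euclidean metric on Z x Y, where labels y are embedded in R^k by lab. *)
Definition eucl_dist (R : realType) (d k : nat) (Y : Type) (lab : Y -> 'rV[R]_k)
  (z1 : 'rV[R]_d) (y1 : Y) (z2 : 'rV[R]_d) (y2 : Y) : R :=
  Num.sqrt (\sum_(i < d) (z1 ord0 i - z2 ord0 i) ^+ 2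
          + \sum_(j < k) (lab y1 ord0 j - lab y2 ord0 j) ^+ 2).

Definition lip1 (R : realType) (d k : nat) (Y : Type) (lab : Y -> 'rV[R]_k)
  (Z : set 'rV[R]_d) (phi : 'rV[R]_d -> Y -> R) : Prop :=
  forall z1 z2 y1 y2, Z z1 -> Z z2 ->
    `|phi z1 y1 - phi z2 y2| <= eucl_dist lab z1 y1 z2 y2.

(* p is a probability density on Z x Y w.r.t. mu (x) counting measure. *)
Definition is_density (R : realType) (d : nat) (Y : finType)
  (mu : {measure set (feat R d) -> \bar R}) (Z : set (feat R d))
  (p : feat R d -> Y -> R) : Prop :=
  [/\ forall z y, 0 <= p z y,
      forall y, measurable_fun Z (fun z => p z y) &
      (\int[mu]_(z in Z) (\sum_(y : Y) p z y)%:E = 1)%E].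

Definition marg (R : realType) (d : nat) (Y : finType) (p : feat R d -> Y -> R)
  (z : feat R d) : R := \sum_(y : Y) p z y.
Definition cond (R : realType) (d : nat) (Y : finType) (p : feat R d -> Y -> R)
  (y : Y) (z : feat R d) : R := p z y / marg p z.

Definition Ejoint (R : realType) (d : nat) (Y : finType)
  (mu : {measure set (feat R d) -> \bar R}) (Z : set (feat R d))
  (p : feat R d -> Y -> R) (phi : 'rV[R]_d -> Y -> R) : \bar R :=
  (\int[mu]_(z in Z) (\sum_(y : Y) phi z y * p z y)%:E)%E.

Definition Emarg (R : realType) (d : nat) (Y : finType)
  (mu : {measure set (feat R d) -> \bar R}) (Z : set (feat R d))
  (p : feat R d -> Y -> R) (g : 'rV[R]_d -> R) : \bar R :=
  (\int[mu]_(z in Z) (g z * marg p z)%:E)%E.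

(* 1-Wasserstein distance (Kantorovich-Rubinstein dual) *)
Definition W1 (R : realType) (d k : nat) (Y : finType) (lab : Y -> 'rV[R]_k)
  (mu : {measure set (feat R d) -> \bar R}) (Z : set (feat R d))
  (p q : feat R d -> Y -> R) : \bar R :=
  ereal_sup [set (Ejoint mu Z p phi - Ejoint mu Z q phi)%E
            | phi in [set phi | lip1 lab Z phi]].

Definition Wcheck (R : realType) (d k : nat) (Y : finType) (lab : Y -> 'rV[R]_k)
  (mu : {measure set (feat R d) -> \bar R}) (Z : set (feat R d))
  (p q : feat R d -> Y -> R) (y : Y) : \bar R :=
  ereal_sup [set (Emarg mu Z p (fun z => (phi z y * cond p y z)%R)
                  - Emarg mu Z q (fun z => (phi z y * cond q y z)%R))%E
            | phi in [set phi | lip1 lab Z phi]].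

From HB Require Import structures.
From mathcomp Require Import all_boot all_order all_algebra.
From mathcomp Require Import all_classical all_reals all_analysis.
From mathcomp Require Import measurable_realfun.
Import Order.TTheory GRing.Theory Num.Theory.
Import numFieldNormedType.Exports.
Local Open Scope classical_set_scope.
Local Open Scope ring_scope.
Set Implicit Arguments.
Unset Strict Implicit.
Unset Printing Implicit Defensive.

(* Every 1-Lipschitz test function phi of the dual formula for W splits over the
   finite label set into its class components phi(., y).  Since
   p(z, y) = P(Y = y | z) p_Z(z), the y-th component of E_P[phi] - E_Q[phi] is
   one of the quantities whose supremum defines W_y, so it is at most W_y;
   summing over y and taking the supremum over phi gives the inequality.
   Splitting the integral requires integrability: phi(., y) is Lipschitz, hence
   continuous, hence Borel measurable and bounded on the compact set Z. *)

Lemma coord_le_mx_norm (K : realDomainType) m n (x : 'M[K]_(m, n)) i j :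
  `|x i j| <= `|x|.
Proof. by rewrite [leRHS]mx_normrE; exact: (le_bigmax _ _ (i, j)). Qed.

Lemma klipschitz_within_continuous (K : realFieldType) (V W : normedModType K)
    (k : K) (A : set V) (f : V -> W) :
  k.-lipschitz_A f -> {within A, continuous f}.
Proof.
move=> fk; apply/subspace_continuousP => x Ax.
apply/cvgrPdist_lt => e e0.
have k1 : 0 < `|k| + 1 by rewrite ltr_wpDl.
rewrite near_withinE; near=> z => Az.
apply: (le_lt_trans (fk (x, z) _)); first by split.
have kk : k <= `|k| + 1 by rewrite (le_trans (ler_norm k)) ?lerDl.
rewrite (le_lt_trans (ler_wpM2r (normr_ge0 _) kk)) // -ltr_pdivlMl //.
by near: z; apply: cvgr_dist_lt; [exact: cvg_id | rewrite mulr_gt0 ?invr_gt0].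
Unshelve. all: by end_near.
Qed.

Lemma within_continuous_measurable_fun (T : ptopologicalType) (R : realType)
    (D : set T) (f : T -> R) :
  (@open T).-sigma.-measurable D -> {within D, continuous f} ->
  measurable_fun (D : set (g_sigma_algebraType (@open T))) f.
Proof.
move=> mD /continuousP cf; apply: (measurability _ (RGenOpens.measurableE R)).
move=> _ [_ [a [b ->] <-]].
have /open_subspaceP [U oU UD] :=
  cf _ (@interval_open _ (BRight a) (BLeft b) isT isT).
rewrite setIC -UD; apply: measurableI => //.
exact: sub_sigma_algebra.
Qed.

Lemma eucl_dist_same_label (R : realType) (d k : nat) (Y : Type)
    (lab : Y -> 'rV[R]_k) (a b : 'rV[R]_d) (y : Y) :
  eucl_dist lab a y b y <= Num.sqrt d%:R * `|a - b|.
Proof.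
rewrite /eucl_dist [X in _ + X]big1 ?addr0 => [|j _]; last first.
  by rewrite subrr expr0n.
have -> : Num.sqrt d%:R * `|a - b| = Num.sqrt (\sum_(i < d) `|a - b| ^+ 2).
  rewrite sumr_const card_ord -[`|a - b| ^+ 2 *+ d]mulr_natl.
  by rewrite sqrtrM ?ler0n // sqrtr_sqr normr_id.
rewrite ler_sqrt; last by apply: sumr_ge0 => i _; exact: sqr_ge0.
apply: ler_sum => i _; rewrite -real_normK ?num_real // ler_sqr ?nnegrE //.
by have := coord_le_mx_norm (a - b) ord0 i; rewrite !mxE.
Qed.

Lemma lip1_klipschitz (R : realType) (d k : nat) (Y : Type)
    (lab : Y -> 'rV[R]_k) (Z : set 'rV[R]_d) (phi : 'rV[R]_d -> Y -> R)
    (y : Y) :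
  lip1 lab Z phi -> (Num.sqrt d%:R).-lipschitz_Z (phi^~ y).
Proof.
move=> phi1 [z1 z2] [/= Z1 Z2].
exact: le_trans (phi1 _ _ y y Z1 Z2) (eucl_dist_same_label _ _ _ _).
Qed.

Section densities.
Variables (R : realType) (d : nat) (Y : finType).
Variables (mu : {measure set (feat R d) -> \bar R}) (Z : set (feat R d)).
Hypothesis mZ : measurable Z.

Lemma density_integrable (r : feat R d -> Y -> R) (y : Y) :
  is_density mu Z r -> mu.-integrable Z (fun z => (r z y)%:E).
Proof.
case=> r0 rm rint.
have mmarg : measurable_fun Z (marg r) by apply: measurable_sum.
apply: (le_integrable mZ (g := fun z => (marg r z)%:E)).
- exact/measurable_EFinP.
- move=> z _; rewrite lee_fin !ger0_norm ?sumr_ge0 //.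
  by rewrite /marg (bigD1 y) //= lerDl sumr_ge0.
- apply/integrableP; split; first exact/measurable_EFinP.
  under eq_integral do rewrite gee0_abs ?lee_fin ?sumr_ge0 //.
  by rewrite rint ltry.
Qed.

Lemma cond_mul_marg (r : feat R d -> Y -> R) (y : Y) (z : feat R d) :
  (forall y, 0 <= r z y) -> cond r y z * marg r z = r z y.
Proof.
(* Where the marginal vanishes, [cond] takes the junk value [r z y / 0 = 0],
   but then [r z y = 0] as well. *)
move=> r0; rewrite /cond; have [m0|m0] := eqVneq (marg r z) 0.
  by rewrite m0 mulr0; apply/esym/(psumr_eq0P (fun i _ => r0 i) m0).
by rewrite divfK.
Qed.

Lemma Emarg_mul_cond (r : feat R d -> Y -> R) (g : 'rV[R]_d -> R) (y : Y) :
  (forall z y, 0 <= r z y) ->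
  Emarg mu Z r (fun z => g z * cond r y z)
  = (\int[mu]_(z in Z) (g z * r z y)%:E)%E.
Proof.
by move=> r0; apply: eq_integral => z _; rewrite -mulrA cond_mul_marg.
Qed.

End densities.

Section lipschitz_test_functions.
Variables (R : realType) (d k : nat) (Y : finType) (lab : Y -> 'rV[R]_k).
Variables (mu : {measure set (feat R d) -> \bar R}) (Z : set 'rV[R]_d).
Hypotheses (cZ : compact Z) (mZ : measurable (Z : set (feat R d))).
Variables (phi : 'rV[R]_d -> Y -> R) (phi1 : lip1 lab Z phi).

Lemma lip1_mul_density_integrable (r : feat R d -> Y -> R) (y : Y) :
  is_density mu Z r -> mu.-integrable Z (fun z => (phi z y * r z y)%:E).
Proof.
move=> hr; have cphi := klipschitz_within_continuous (lip1_klipschitz y phi1).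
have mphi := within_continuous_measurable_fun mZ cphi.
have /compact_bounded[M [_ phiM]] := continuous_compact cphi cZ.
have bphi : [bounded phi z y | z in (Z : set (feat R d))].
  exists M; split; rewrite ?num_real // => N MN z Zz.
  by apply: phiM => //; exists z.
have := integrableMr mZ mphi bphi (density_integrable mZ y hr).
by apply: (eq_integrable mZ) => z _ /=; rewrite EFinM.
Qed.

Lemma Ejoint_sum (r : feat R d -> Y -> R) : is_density mu Z r ->
  Ejoint mu Z r phi = (\sum_(y : Y) \int[mu]_(z in Z) (phi z y * r z y)%:E)%E.
Proof.
move=> hr; rewrite /Ejoint; under eq_integral do rewrite -sumEFin.
exact: (integral_sum mZ (fun y => lip1_mul_density_integrable y hr)).
Qed.

End lipschitz_test_functions.

Theorem lemma3 (R : realType) (d k : nat) (Y : finType)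
  (lab : Y -> 'rV[R]_k) (lab_inj : injective lab)
  (Z : set 'rV[R]_d) (Zcpt : compact Z) (Zmeas : measurable (Z : set (feat R d)))
  (mu : {measure set (feat R d) -> \bar R})
  (p q : feat R d -> Y -> R)
  (hp : is_density mu Z p) (hq : is_density mu Z q) :
  (W1 lab mu Z p q <= \sum_(y : Y) Wcheck lab mu Z p q y)%E.
Proof.
apply: ge_ereal_sup => _ [phi phi1 <-].
rewrite !(Ejoint_sum Zcpt Zmeas phi1) // -fin_num_sumeN => [|y _]; last first.
  exact/integrable_fin_num/(lip1_mul_density_integrable Zcpt Zmeas phi1).
rewrite -big_split /=; apply: lee_sum => y _.
have [[p0 _ _] [q0 _ _]] := (hp, hq).
rewrite -(Emarg_mul_cond _ _ _ _ p0) -(Emarg_mul_cond _ _ _ _ q0).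
by apply: ereal_sup_ubound; exists phi.
Qed.
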